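(* Let $p(m,n)$ be as defined in the context, and let $x^N_0,y^N_0\in N^{-1}\mathbb{Z}_{>0}$ with $x^N_0\to x_0>0$ and $y^N_0\to y_0>0$ as $N\to\infty$. If $x_0\ne y_0$, then $$\lim_{N\to\infty}p(Nx^N_0,Ny^N_0)=\mathbf 1_{\{x_0<y_0\}}.$$
   Context: For integers $m,n\ge0$ with $m+n>0$, $p(m,n)$ is the unique function satisfying $p(m,n)=\frac{n}{m+n}p(m-1,n)+\frac{m}{m+n}p(m,n-1)$ for $m,n>0$, with $p(m,0)=0$ for $m>0$ and $p(0,n)=1$ for $n>0$. It is the probability that player A (starting with $m$ units) is ruined before player B (starting with $n$ units) when, from state $(m,n)$, B loses a unit with probability $m/(m+n)$ and A loses a unit with probability $n/(m+n)$. *)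

From Stdlib Require Import Reals.
Open Scope R_scope.

(* p(m,n) of the paper, defined by the recursion
     p(m,n) = n/(m+n) p(m-1,n) + m/(m+n) p(m,n-1)  (m,n>0),
     p(m,0) = 0 (m>0),  p(0,n) = 1 (n>0).
   The value p(0,0) is not defined in the paper; here it is (junk) 1. *)
Fixpoint p (m : nat) : nat -> R :=
  match m with
  | O => fun _ => 1
  | S m' =>
      fix q (n : nat) : R :=
        match n with
        | O => 0
        | S n' =>
            INR n / (INR m + INR n) * p m' n
            + INR m / (INR m + INR n) * q n'
        end
  end.

Definition ind_lt (x y : R) : R := if Rlt_dec x y then 1 else 0.

Lemma p_rec (m n : nat) : (0 < m)%nat -> (0 < n)%nat ->
  p m n = INR n / (INR m + INR n) * p (m - 1) n
          + INR m / (INR m + INR n) * p m (n - 1).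
Proof.
  destruct m as [|m']; [intro H; inversion H|].
  destruct n as [|n']; [intros _ H; inversion H|].
  intros _ _. simpl (S m' - 1)%nat. simpl (S n' - 1)%nat.
  rewrite Nat.sub_0_r, Nat.sub_0_r. reflexivity.
Qed.

From Stdlib Require Import Reals Lra Lia.
From Coquelicot Require Import Coquelicot.
Open Scope R_scope.

(* The ruin probability is bounded by any function that is superharmonic for the
   chain and dominates the boundary values.  For W(x,y) = x^2 - y^2 - x - y a step
   of the chain changes W by 2 - 2x or by 2y, with mean 2y/(x+y) >= 0, so
   (A - W)_+^2 / A^2, corrected by a term linear in x+y absorbing the squared
   increments, is superharmonic and is >= 1 on {x = 0}.  Taking A = W(m,n) yields
   p(m,n) <= 4(m+n)^3 / W(m,n)^2, which is O(1/N) when m ~ N x0, n ~ N y0 and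
   x0 > y0.  The case x0 < y0 follows from the symmetry p(m,n) + p(n,m) = 1. *)

Lemma p_SS m n : p (S m) (S n) =
  INR (S n) / (INR (S m) + INR (S n)) * p m (S n)
  + INR (S m) / (INR (S m) + INR (S n)) * p (S m) n.
Proof. reflexivity. Qed.

Lemma p_ge0 m n : 0 <= p m n.
Proof.
  revert n; induction m as [|m IHm]; intro n; [simpl; lra|].
  induction n as [|n IHn]; [simpl; lra|].
  rewrite p_SS.
  pose proof (lt_0_INR (S m) ltac:(lia)); pose proof (lt_0_INR (S n) ltac:(lia)).
  pose proof (IHm (S n)).
  apply Rplus_le_le_0_compat; apply Rmult_le_pos; auto;
    apply Rlt_le, Rdiv_lt_0_compat; lra.
Qed.

Lemma p_add_swap m n : (0 < m + n)%nat -> p m n + p n m = 1.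
Proof.
  remember (m + n)%nat as k eqn:Hk; revert m n Hk.
  induction k as [|k IH]; intros m n Hk Hpos; [lia|].
  destruct m as [|m], n as [|n]; [lia|simpl; lra|simpl; lra|].
  rewrite (p_SS m n), (p_SS n m).
  assert (E1 : p m (S n) + p (S n) m = 1) by (apply IH; lia).
  assert (E2 : p (S m) n + p n (S m) = 1) by (apply IH; lia).
  pose proof (lt_0_INR (S m) ltac:(lia)); pose proof (lt_0_INR (S n) ltac:(lia)).
  replace (p (S n) m) with (1 - p m (S n)) by lra.
  replace (p n (S m)) with (1 - p (S m) n) by lra.
  field; lra.
Qed.

Definition potential (x y : R) : R := x * x - y * y - x - y.

Definition pos_sq (u : R) : R := Rmax 0 u * Rmax 0 u.

Lemma pos_sq_ge0 u : 0 <= pos_sq u.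
Proof. apply Rle_0_sqr. Qed.

Lemma pos_sq_sub_le u d : pos_sq (u - d) <= pos_sq u - 2 * Rmax 0 u * d + d * d.
Proof.
  unfold pos_sq.
  destruct (Rle_dec 0 u), (Rle_dec 0 (u - d)).
  - rewrite !Rmax_right by lra; nra.
  - rewrite (Rmax_right 0 u), (Rmax_left 0 (u - d)) by lra; nra.
  - rewrite (Rmax_left 0 u), (Rmax_right 0 (u - d)) by lra; nra.
  - rewrite !Rmax_left by lra; nra.
Qed.

Definition lyap_bound (A S x y : R) : R :=
  (pos_sq (A - potential x y) + S * (x + y)) / (A * A).

Lemma lyap_bound_ge0 A S x y : 0 < A -> 0 <= S -> 0 <= x -> 0 <= y ->
  0 <= lyap_bound A S x y.
Proof.
  intros HA HS Hx Hy; unfold lyap_bound.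
  apply Rdiv_le_0_compat; [|nra].
  pose proof (pos_sq_ge0 (A - potential x y)); nra.
Qed.

Lemma lyap_bound_ge1_left A S y : 0 < A -> 0 <= S -> 0 <= y ->
  1 <= lyap_bound A S 0 y.
Proof.
  intros HA HS Hy; unfold lyap_bound, pos_sq, potential.
  rewrite Rmax_right by nra.
  apply Rle_div_r; nra.
Qed.

Lemma lyap_bound_superharmonic A S x y :
  0 < A -> 1 <= x -> 1 <= y -> 4 * x * x <= S -> 4 * y * y <= S ->
  y / (x + y) * lyap_bound A S (x - 1) y + x / (x + y) * lyap_bound A S x (y - 1)
  <= lyap_bound A S x y.
Proof.
  intros HA Hx Hy HSx HSy; unfold lyap_bound.
  set (u := A - potential x y); set (r := Rmax 0 u).
  assert (Hr : 0 <= r) by apply Rmax_l.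
  pose proof (pos_sq_sub_le u (2 - 2 * x)) as H1.
  pose proof (pos_sq_sub_le u (2 * y)) as H2.
  replace (u - (2 - 2 * x)) with (A - potential (x - 1) y) in H1
    by (unfold u, potential; ring).
  replace (u - 2 * y) with (A - potential x (y - 1)) in H2
    by (unfold u, potential; ring).
  fold r in H1, H2.
  set (P1 := pos_sq (A - potential (x - 1) y)) in *.
  set (P2 := pos_sq (A - potential x (y - 1))) in *.
  (* The drift terms combine to -4 r y <= 0. *)
  assert (Hmean : y * P1 + x * P2 <= (pos_sq u + S) * (x + y)).
  { assert (y * P1 <= y * (pos_sq u - 2 * r * (2 - 2 * x) + (2 - 2 * x) * (2 - 2 * x)))
      by (apply Rmult_le_compat_l; lra).
    assert (x * P2 <= x * (pos_sq u - 2 * r * (2 * y) + (2 * y) * (2 * y)))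
      by (apply Rmult_le_compat_l; lra).
    nra. }
  replace (y / (x + y) * ((P1 + S * (x - 1 + y)) / (A * A))
           + x / (x + y) * ((P2 + S * (x + (y - 1))) / (A * A)))
    with (((y * P1 + x * P2) / (x + y) + S * (x + y - 1)) / (A * A)) by (field; lra).
  apply Rmult_le_compat_r; [left; apply Rinv_0_lt_compat; nra|].
  assert ((y * P1 + x * P2) / (x + y) <= pos_sq u + S)
    by (apply Rle_div_l; lra).
  lra.
Qed.

Lemma p_le_lyap_bound A K m n : 0 < A -> (m + n <= K)%nat ->
  p m n <= lyap_bound A (4 * INR K ^ 2) (INR m) (INR n).
Proof.
  intros HA; pose proof (pos_INR K) as HK0.
  assert (HS : 0 <= 4 * INR K ^ 2) by nra.
  revert n; induction m as [|m IHm]; intros n HK.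
  - apply lyap_bound_ge1_left; auto using pos_INR.
  - induction n as [|n IHn].
    + apply lyap_bound_ge0; auto using pos_INR.
    + rewrite p_SS.
      set (x := INR (S m)); set (y := INR (S n)).
      assert (Ex : INR m = x - 1) by (unfold x; rewrite S_INR; ring).
      assert (Ey : INR n = y - 1) by (unfold y; rewrite S_INR; ring).
      assert (Hx : 1 <= x) by (pose proof (pos_INR m); lra).
      assert (Hy : 1 <= y) by (pose proof (pos_INR n); lra).
      assert (HxK : x <= INR K) by (apply le_INR; lia).
      assert (HyK : y <= INR K) by (apply le_INR; lia).
      assert (I1 : p m (S n) <= lyap_bound A (4 * INR K ^ 2) (x - 1) y)
        by (rewrite <- Ex; apply IHm; lia).
      assert (I2 : p (S m) n <= lyap_bound A (4 * INR K ^ 2) x (y - 1))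
        by (rewrite <- Ey; apply IHn; lia).
      eapply Rle_trans; [|apply lyap_bound_superharmonic; nra].
      apply Rplus_le_compat; apply Rmult_le_compat_l; auto;
        apply Rlt_le, Rdiv_lt_0_compat; lra.
Qed.

Lemma p_le_cubic_div_potential m n : 0 < potential (INR m) (INR n) ->
  p m n <= 4 * (INR m + INR n) ^ 3 / potential (INR m) (INR n) ^ 2.
Proof.
  intros HW.
  eapply Rle_trans; [apply (p_le_lyap_bound _ (m + n) m n HW); lia|].
  unfold lyap_bound, pos_sq; rewrite Rminus_diag, Rmax_left, plus_INR by lra.
  right; field; lra.
Qed.

Lemma p_le_rescaled m n (N u v : R) : 0 < N -> INR m = u * N -> INR n = v * N ->
  0 < u * u - v * v - (u + v) / N ->
  p m n <= / N * (4 * (u + v) ^ 3 / (u * u - v * v - (u + v) / N) ^ 2).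
Proof.
  intros HN Hm Hn Hw.
  assert (EW : potential (INR m) (INR n) = N ^ 2 * (u * u - v * v - (u + v) / N))
    by (rewrite Hm, Hn; unfold potential; field; lra).
  eapply Rle_trans; [apply p_le_cubic_div_potential; rewrite EW; apply Rmult_lt_0_compat; [apply pow_lt|]; lra|].
  assert (HNw : (u * u - v * v) * N - (u + v) = (u * u - v * v - (u + v) / N) * N)
    by (field; lra).
  pose proof (Rmult_lt_0_compat _ _ Hw HN).
  right; rewrite EW, Hm, Hn; field; lra.
Qed.

Lemma is_lim_seq_pow (u : nat -> R) (l : R) (k : nat) :
  is_lim_seq u l -> is_lim_seq (fun N => u N ^ k) (l ^ k).
Proof.
  intros Hu; induction k as [|k IHk]; [apply is_lim_seq_const|].
  exact (is_lim_seq_mult' _ _ _ _ Hu IHk).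
Qed.

Lemma p_vanishes (a b : nat -> nat) (x0 y0 : R) :
  is_lim_seq (fun N => INR (a N) / INR N) x0 ->
  is_lim_seq (fun N => INR (b N) / INR N) y0 ->
  0 <= y0 -> y0 < x0 ->
  is_lim_seq (fun N => p (a N) (b N)) 0.
Proof.
  intros Hu Hv Hy0 Hxy.
  set (u := fun N => INR (a N) / INR N) in *.
  set (v := fun N => INR (b N) / INR N) in *.
  set (w := fun N => u N * u N - v N * v N - (u N + v N) / INR N).
  assert (Hinv : is_lim_seq (fun N => / INR N) 0)
    by exact (is_lim_seq_inv _ _ is_lim_seq_INR ltac:(discriminate)).
  assert (Huv : is_lim_seq (fun N => u N + v N) (x0 + y0))
    by exact (is_lim_seq_plus' _ _ _ _ Hu Hv).
  assert (Hw : is_lim_seq w (x0 * x0 - y0 * y0)).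
  { replace (x0 * x0 - y0 * y0) with (x0 * x0 - y0 * y0 - (x0 + y0) * 0) by ring.
    apply is_lim_seq_minus'; [apply is_lim_seq_minus'|];
      apply is_lim_seq_mult'; auto. }
  set (L := x0 * x0 - y0 * y0).
  assert (HL : 0 < L) by (unfold L; nra).
  (* [w N] is W(a N, b N) / N^2, so the cubic bound on [p] rescales to the
     sequence below. *)
  assert (Hbound : is_lim_seq
      (fun N => / INR N * (4 * (u N + v N) ^ 3 / w N ^ 2)) 0).
  { replace (Finite 0) with (Finite (0 * (4 * (x0 + y0) ^ 3 / L ^ 2)))
      by (f_equal; ring).
    apply is_lim_seq_mult'; auto.
    apply is_lim_seq_div'; [|apply is_lim_seq_pow; auto|apply pow_nonzero; lra].
    apply is_lim_seq_mult'; [apply is_lim_seq_const|apply is_lim_seq_pow; auto]. }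
  apply (is_lim_seq_le_le_loc (fun _ => 0) _ _ _)
    with (2 := is_lim_seq_const 0) (3 := Hbound).
  destruct (proj2 (is_lim_seq_spec w L) Hw (mkposreal L HL)) as [N0 HN0].
  exists (max N0 1); intros N HN.
  specialize (HN0 N ltac:(lia)); simpl in HN0; apply Rabs_def2 in HN0.
  pose proof (lt_0_INR N ltac:(lia)) as HNpos.
  split; [apply p_ge0|].
  apply p_le_rescaled; [exact HNpos| | |unfold w in HN0; lra];
    unfold u, v; field; lra.
Qed.

Theorem mainTheorem8 (a b : nat -> nat) (x0 y0 : R)
  (ha : forall N : nat, (0 < N)%nat -> (0 < a N)%nat)
  (hb : forall N : nat, (0 < N)%nat -> (0 < b N)%nat)
  (hx : Un_cv (fun N => INR (a N) / INR N) x0)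
  (hy : Un_cv (fun N => INR (b N) / INR N) y0)
  (hx0 : 0 < x0) (hy0 : 0 < y0) (hxy : x0 <> y0) :
  Un_cv (fun N => p (a N) (b N)) (ind_lt x0 y0).
Proof.
  apply is_lim_seq_Reals in hx, hy; apply is_lim_seq_Reals.
  unfold ind_lt; destruct (Rlt_dec x0 y0) as [Hlt|Hge].
  - assert (Hswap : is_lim_seq (fun N => 1 - p (b N) (a N)) (1 - 0))
      by (apply is_lim_seq_minus'; [apply is_lim_seq_const|];
          apply (p_vanishes b a y0 x0); auto; lra).
    rewrite Rminus_0_r in Hswap.
    refine (is_lim_seq_ext_loc _ _ _ _ Hswap).
    exists 1%nat; intros N HN.
    pose proof (p_add_swap (a N) (b N) ltac:(specialize (ha N HN); lia)); lra.
  - apply (p_vanishes a b x0 y0); auto; lra.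
Qed.
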